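(* Let $\mathcal C=\{\hat\mu_1,\dots,\hat\mu_{k'}\}\subset\mathbb{R}^n$ with Voronoi partition $V_1,\dots,V_{k'}$, let $\sigma>0$, $R\ge0$, $\epsilon\in(0,1)$, and let $\mu\in\mathbb{R}^n$ satisfy $\|\mu-\hat\mu_i\|\le R$ for some $i$. Let $Y=\mu+\sigma\xi$ with $\xi\sim\mathcal N(0,I_n)$, and let $i'$ be the (random) index with $Y\in V_{i'}$. Then with probability at least $1-\epsilon$, $$\|\mu-\hat\mu_{i'}\|\le3R+2\sqrt2\,\sigma\sqrt{\ln(k'/\epsilon)}.$$
   Context: The Voronoi partition of $\{\hat\mu_1,\dots,\hat\mu_{k'}\}$ is $V_j=\{x:\|x-\hat\mu_j\|=\min_{j'}\|x-\hat\mu_{j'}\|\}$, with ties (a null set) broken arbitrarily so that the $V_j$ partition $\mathbb{R}^n$. *)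

From HB Require Import structures.
From mathcomp Require Import all_boot all_order all_algebra.
From mathcomp Require Import all_classical all_reals all_analysis.
Set Implicit Arguments. Unset Strict Implicit. Unset Printing Implicit Defensive.
Import Order.TTheory GRing.Theory Num.Theory.
Local Open Scope classical_set_scope.
Local Open Scope ring_scope.

Definition enorm {R : realType} {n : nat} (v : 'I_n -> R) : R :=
  Num.sqrt (\sum_(i < n) v i ^+ 2).

(* cell is a Voronoi assignment for the centers C: x lies in V_(cell x),
   i.e. C (cell x) is a nearest center to x (ties broken arbitrarily). *)
Definition voronoi_assignment {R : realType} {n k : nat}
  (C : 'I_k -> ('I_n -> R)) (cell : ('I_n -> R) -> 'I_k) : Prop :=
  forall x j, enorm (fun t => x t - C (cell x) t) <= enorm (fun t => x t - C j t).

Definition mutually_independent_RVs {R : realType} (d : measure_display)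
  (T : measurableType d) (P : probability T R) (n : nat)
  (X : 'I_n -> {RV P >-> R}) : Prop :=
  forall B : 'I_n -> set R, (forall i, measurable (B i)) ->
    P (\bigcap_(i in [set: 'I_n]) (X i @^-1` B i)) =
    (\prod_(i < n) P (X i @^-1` B i))%E.

Definition std_gaussian_vector {R : realType} (d : measure_display)
  (T : measurableType d) (P : probability T R) (n : nat)
  (xi : 'I_n -> {RV P >-> R}) : Prop :=
  (forall i (A : set R), measurable A ->
     distribution P (xi i) A = normal_prob 0 1 A) /\
  mutually_independent_RVs xi.

(* On the event that the standard Gaussian xi has component less than
   t = sqrt (2 ln (k / eps)) along each of the k directions from the center C i
   near mu to the other centers C j, the Voronoi inequality
   |Y - C j| <= |Y - C i| for j = cell Y expands to
   |mu - C j|^2 <= |mu - C i|^2 + 2 sigma <C j - C i, xi>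
               <= r^2 + 2 sigma t (r + |mu - C j|)       (r := |mu - C i|),
   hence |mu - C j| <= r + 2 sigma t, which is even better than the claim.
   Independence of the coordinates gives E exp <a, xi> = exp (|a|^2 / 2), so by
   the Chernoff bound each directional tail has probability at most
   exp (- t^2 / 2) = eps / k, and a union bound over the k directions ends the
   proof. *)

From HB Require Import structures.
From mathcomp Require Import all_boot all_order all_algebra.
From mathcomp Require Import all_classical all_reals all_analysis.
From mathcomp Require Import measurable_realfun.
From mathcomp Require Import ring lra.
Set Implicit Arguments. Unset Strict Implicit. Unset Printing Implicit Defensive.
Import Order.TTheory GRing.Theory Num.Theory.
Local Open Scope classical_set_scope.
Local Open Scope ring_scope.

Section weighted_pushforward.
Context (R : realType) (dT dY : measure_display).
Context (T : measurableType dT) (Y : measurableType dY).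
Variables (mu : {measure set T -> \bar R}) (nu : {measure set Y -> \bar R}).
Variables (X : T -> Y) (g : T -> R) (c : R).
Hypotheses (mX : measurable_fun setT X) (mg : measurable_fun setT g).
Hypotheses (g_ge0 : forall w, 0 <= g w) (c_ge0 : 0 <= c).
Hypothesis weighted_law : forall A, measurable A ->
  (\int[mu]_w (\1_A (X w) * g w)%:E = c%:E * nu A)%E.

Import HBNNSimple.

Let measurable_compM (f : Y -> R) : measurable_fun setT f ->
  measurable_fun setT (fun w => f (X w) * g w).
Proof. by move=> mf; apply/measurable_funM => //; exact: measurableT_comp. Qed.

Lemma ge0_integral_weighted_comp_nnsfun (h : {nnsfun Y >-> R}) :
  (\int[mu]_w (h (X w) * g w)%:E = c%:E * \int[nu]_y (h y)%:E)%E.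
Proof.
rewrite integralT_nnsfun sintegralE ge0_mule_fsumr; last first.
  by move=> r; exact: nnsfun_mulemu_ge0.
under eq_integral => w _.
  rewrite EFinM (fimfunE h (X w)) -fsumEFin// ge0_mule_fsuml; last first.
    by move=> r; exact: nnfun_muleindic_ge0.
  over.
rewrite ge0_integral_fsum//; last 2 first.
  - move=> r; apply/measurable_EFinP; apply: measurable_funM => //.
    by apply: measurable_funM => //; exact: measurableT_comp.
  - by move=> r w _; apply: mule_ge0; [exact: nnfun_muleindic_ge0|rewrite lee_fin].
apply: eq_fsbigr => r /[1!inE] -[y _ <-].
under eq_integral do rewrite -EFinM -mulrA EFinM.
rewrite ge0_integralZl_EFin//; last 2 first.
  - by move=> w _; rewrite lee_fin mulr_ge0.
  - by apply/measurable_EFinP/measurable_compM; exact: measurable_indic.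
by rewrite weighted_law// muleCA.
Qed.

Lemma ge0_integral_weighted_comp (f : Y -> R) :
  (forall y, 0 <= f y) -> measurable_fun setT f ->
  (\int[mu]_w (f (X w) * g w)%:E = c%:E * \int[nu]_y (f y)%:E)%E.
Proof.
move=> f_ge0 mf.
have mEf : measurable_fun setT (EFin \o f) by exact/measurable_EFinP.
pose h := nnsfun_approx measurableT mEf.
have h_cvg y : (EFin \o h^~ y) @ \oo --> (f y)%:E.
  by apply: (cvg_nnsfun_approx measurableT mEf) => // x _; rewrite lee_fin.
have h_nd y : {homo h^~ y : a b / (a <= b)%N >-> a <= b}.
  by move=> a b ab; exact/lefP/nd_nnsfun_approx.
have lim_h (k : R) y : (fun m => (k * h m y)%:E) @ \oo --> (k * f y)%:E.
  by rewrite EFinM; under eq_fun do rewrite EFinM; apply: cvgeZl => //; exact: h_cvg.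
transitivity (limn (fun m => \int[mu]_w (h m (X w) * g w)%:E))%E.
  rewrite -monotone_convergence//; last 3 first.
  - by move=> m; apply/measurable_EFinP/measurable_compM.
  - by move=> m w _; rewrite lee_fin mulr_ge0.
  - by move=> w _ a b ab; rewrite lee_fin ler_wpM2r// h_nd.
  apply: eq_integral => w _; apply/esym/cvg_lim => //.
  by under eq_fun do rewrite mulrC; rewrite mulrC; exact: lim_h.
rewrite -ge0_integralZl_EFin//; last by move=> y _; rewrite lee_fin.
transitivity (\int[nu]_y limn (fun m => (c * h m y)%:E))%E; last first.
  by apply: eq_integral => y _; apply/cvg_lim => //; exact: lim_h.
rewrite monotone_convergence//; last 3 first.
- by move=> m; apply/measurable_EFinP/measurable_funM.
- by move=> m y _; rewrite lee_fin mulr_ge0.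
- by move=> y _ a b ab; rewrite lee_fin ler_wpM2l// h_nd.
congr (limn _); apply/funext => m.
rewrite ge0_integral_weighted_comp_nnsfun.
under [RHS]eq_integral do rewrite EFinM.
rewrite ge0_integralZl_EFin//; first by move=> z _; rewrite lee_fin.
exact/measurable_EFinP/measurable_funPT.
Qed.
End weighted_pushforward.

Section standard_normal.
Context (R : realType).
Local Notation mu := (@lebesgue_measure R).

Lemma ge0_integral_normal_prob (f : R -> R) :
  (forall y, 0 <= f y) -> measurable_fun setT f ->
  (\int[normal_prob 0 1]_y (f y)%:E = \int[mu]_y (f y * normal_pdf 0 1 y)%:E)%E.
Proof.
move=> f_ge0 mf; rewrite (@ge0_integral_weighted_comp _ _ _ _ _ mu (normal_prob 0 1)
  id (normal_pdf 0 1) 1)//; first by rewrite mul1e.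
- exact: measurable_normal_pdf.
- exact: normal_pdf_ge0.
- move=> A mA; rewrite mul1e /normal_prob [RHS]integral_mkcond.
  by apply: eq_integral => y _; rewrite epatch_indic /= -EFinM mulrC.
Qed.

Lemma normal_prob_mgf (a : R) :
  (\int[normal_prob 0 1]_y (expR (a * y))%:E = (expR (a ^+ 2 / 2))%:E)%E.
Proof.
rewrite ge0_integral_normal_prob//; last exact: measurableT_comp.
(* completing the square: e^(a y) times the N(0,1) density is e^(a^2/2) times
   the N(a,1) density *)
transitivity (\int[mu]_y ((expR (a ^+ 2 / 2))%:E * (normal_pdf a 1 y)%:E))%E.
  apply: eq_integral => y _; rewrite -EFinM /normal_pdf oner_eq0 /= /normal_fun.
  by rewrite mulrCA -expRD mulrCA -expRD expr1n; congr (_ * expR _ )%:E; field.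
rewrite ge0_integralZl_EFin ?expR_ge0 ?integral_normal_pdf ?mule1//.
  by move=> y _; rewrite lee_fin normal_pdf_ge0.
by apply/measurable_EFinP; exact: measurable_normal_pdf.
Qed.

End standard_normal.

Section independent_product.
Context (R : realType) (d : measure_display) (T : measurableType d).
Variables (P : probability T R) (n : nat) (xi : 'I_n -> {RV P >-> R}).
Hypothesis xi_indep : mutually_independent_RVs xi.
Variables (F : 'I_n -> R -> R) (c : 'I_n -> R).
Hypotheses (F_ge0 : forall i y, 0 <= F i y) (mF : forall i, measurable_fun setT (F i)).
Hypothesis EF : forall i, (\int[P]_w (F i (xi i w))%:E = (c i)%:E)%E.

(* Induction on m interpolates between the definition of independence
   (m = 0) and the product formula for the F i (m = n). *)
Let factor m (B : 'I_n -> set R) (i : 'I_n) : R -> R := if (i < m)%N then F i else \1_(B i).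
Let mean m (B : 'I_n -> set R) (i : 'I_n) : R :=
  if (i < m)%N then c i else fine (P (xi i @^-1` B i)).

Let factor_ge0 m B i y : 0 <= factor m B i y.
Proof. by rewrite /factor; case: ifP. Qed.

Let mean_ge0 m B i : 0 <= mean m B i.
Proof.
rewrite /mean; case: ifP => _; last exact: fine_ge0.
by rewrite -lee_fin -EF integral_ge0// => w _; rewrite lee_fin.
Qed.

Let measurable_factor_prod m B (p : pred 'I_n) : (forall i, measurable (B i)) ->
  measurable_fun setT (fun w => \prod_(i | p i) factor m B i (xi i w)).
Proof.
move=> mB; under eq_fun do rewrite big_mkcond /=.
apply: measurable_prod => i _; case: (p i) => //; apply: measurableT_comp => //.
by rewrite /factor; case: ifP => // _; exact: measurable_indic.
Qed.

Let independent_mixed_prod0 B : (forall i, measurable (B i)) ->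
  (\int[P]_w (\prod_i factor 0 B i (xi i w))%:E = (\prod_i mean 0 B i)%:E)%E.
Proof.
move=> mB; pose E := \bigcap_(i in [set: 'I_n]) (xi i @^-1` B i).
have mE : measurable E.
  by apply: fin_bigcap_measurable => // i _; exact: measurable_funPTI.
transitivity (\int[P]_w (\1_E w)%:E)%E.
  apply: eq_integral => w _; congr EFin; rewrite /factor /=.
  have [wE|wNE] := pselect (E w).
    by rewrite indicE mem_set// big1// => i _; rewrite indicE mem_set//; exact: wE.
  have [i /= Bi] : exists i, ~ B i (xi i w).
    by apply/existsNP => allB; apply: wNE => i _; exact: allB.
  by rewrite indicE memNset// (bigD1 i)//= indicE memNset// mul0r.
rewrite integral_indic// setIT; apply: eq_trans (xi_indep mB) _.
rewrite -prodEFin; apply: eq_bigr => i _; rewrite /mean /= fineK// fin_num_measure//.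
exact: measurable_funPTI.
Qed.

Let independent_mixed_prod m : (m <= n)%N -> forall B, (forall i, measurable (B i)) ->
  (\int[P]_w (\prod_i factor m B i (xi i w))%:E = (\prod_i mean m B i)%:E)%E.
Proof.
elim: m => [_|m IH lt_mn] B mB; first exact: independent_mixed_prod0.
pose j : 'I_n := Ordinal lt_mn.
have ltSj i : i != j -> (i < m.+1)%N = (i < m)%N.
  by move=> ij; rewrite ltnS leq_eqVlt -[m]/(val j) (inj_eq val_inj) (negbTE ij).
pose G w := \prod_(i | i != j) factor m.+1 B i (xi i w).
pose c' := \prod_(i | i != j) mean m.+1 B i.
have weighted_law A : measurable A ->
    (\int[P]_w (\1_A (xi j w) * G w)%:E = c'%:E * distribution P (xi j) A)%E.
  move=> mA; pose B' i := if i == j then A else B i.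
  have mB' i : measurable (B' i) by rewrite /B'; case: ifP.
  have factorB' i : i != j -> factor m B' i = factor m.+1 B i.
    by move=> ij; rewrite /factor /B' ltSj// (negbTE ij).
  have meanB' i : i != j -> mean m B' i = mean m.+1 B i.
    by move=> ij; rewrite /mean /B' ltSj// (negbTE ij).
  transitivity (\int[P]_w (\prod_i factor m B' i (xi i w))%:E)%E.
    have factorB'j : factor m B' j = \1_A by rewrite /factor /B' ltnn eqxx.
    apply: eq_integral => w _; rewrite (bigD1 j)//= factorB'j.
    by congr (_ * _)%:E; apply: eq_bigr => i ij; rewrite factorB'.
  rewrite IH ?(ltnW lt_mn)// (bigD1 j)//= EFinM muleC; congr (_ * _)%E.
    by congr EFin; apply: eq_bigr => i ij; rewrite meanB'.
  by rewrite /mean /B' ltnn eqxx fineK// fin_num_measure//; exact: measurable_funPTI.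
transitivity (\int[P]_w (F j (xi j w) * G w)%:E)%E.
  by apply: eq_integral => w _; rewrite (bigD1 j)//= /factor ltnSn.
rewrite (ge0_integral_weighted_comp (nu := distribution P (xi j)) _ _ _ _ weighted_law)//.
- rewrite ge0_integral_distribution//;
    [|by apply/measurable_EFinP; exact: mF|by move=> y; rewrite lee_fin].
  rewrite [in RHS](bigD1 j)//= EFinM muleC /mean ltnSn; congr (_ * _)%E.
  exact: EF.
- exact: measurable_factor_prod.
- by move=> w; apply: prodr_ge0 => i _; exact: factor_ge0.
- by apply: prodr_ge0 => i _; exact: mean_ge0.
Qed.

Lemma independent_prod_expectation :
  (\int[P]_w (\prod_i F i (xi i w))%:E = (\prod_i c i)%:E)%E.
Proof.
have := independent_mixed_prod (leqnn n) (fun _ => measurableT).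
rewrite /factor /mean; under eq_integral do under eq_bigr do rewrite ltn_ord.
by under eq_bigr do rewrite ltn_ord.
Qed.

End independent_product.

Lemma measure_bigcup_ord_le (R : realType) (d : measure_display) (T : measurableType d)
    (mu : {measure set T -> \bar R}) (k : nat) (E : 'I_k -> set T) (p : R) :
  (forall j, measurable (E j)) -> (forall j, (mu (E j) <= p%:E)%E) ->
  (mu (\bigcup_(j in [set: 'I_k]) E j) <= (k%:R * p)%:E)%E.
Proof.
move=> mE E_le.
rewrite (le_trans (content_sub_fsum mu finite_finset (fun j _ => mE j) _ (@subset_refl _ _)))//.
  exact: (fin_bigcup_measurable finite_finset (fun j _ => mE j)).
rewrite (fsbigE (index_enum 'I_k)) ?index_enum_uniq ?subsetT//; last first.
  by move=> j _; rewrite mem_index_enum.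
under eq_bigl do rewrite in_setT.
apply: (@le_trans _ _ (\sum_(j < k) p%:E)%E); first by apply: lee_sum => j _; exact: E_le.
by rewrite sumEFin sumr_const card_ord mulr_natl.
Qed.

Section gaussian_vector.
Context (R : realType) (d : measure_display) (T : measurableType d).
Variables (P : probability T R) (n : nat) (xi : 'I_n -> {RV P >-> R}).

Definition lincomb (u : 'I_n -> R) (w : T) : R := \sum_i u i * xi i w.

Lemma measurable_lincomb u : measurable_fun setT (lincomb u).
Proof. by apply: measurable_sum => i _; exact: measurable_funM. Qed.

HB.instance Definition _ u := isMeasurableFun.Build _ _ T R (lincomb u)
  (measurable_lincomb u).

Hypothesis xi_gauss : std_gaussian_vector xi.

(* The law of xi i agrees with normal_prob 0 1 only on measurable sets, and the two
   live on different measurable structures on R; ge0_integral_weighted_comp with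
   weight 1 transports the integral between them. *)
Lemma std_gaussian_coord_mgf i (a : R) :
  (\int[P]_w (expR (a * xi i w))%:E = (expR (a ^+ 2 / 2))%:E)%E.
Proof.
rewrite -normal_prob_mgf -[RHS]mul1e; under eq_integral do rewrite -[X in X%:E]mulr1.
apply: (@ge0_integral_weighted_comp _ _ _ _ (g_sigma_algebraType R.-ocitv.-measurable)
  P (normal_prob 0 1) (xi i) (fun=> 1) 1) => //.
- exact: (measurable_funPT (xi i)).
- move=> A mA; under eq_integral do rewrite mulr1.
  rewrite mul1e integral_indic//; last exact: (measurable_funPTI (xi i)).
  by rewrite setIT; exact: (proj1 xi_gauss).
- exact: measurableT_comp.
Qed.

Lemma std_gaussian_mgf (a : 'I_n -> R) :
  (\int[P]_w (expR (\sum_i a i * xi i w))%:E = (expR (\sum_i a i ^+ 2 / 2))%:E)%E.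
Proof.
under eq_integral do rewrite expR_sum; rewrite expR_sum.
apply: (independent_prod_expectation (proj2 xi_gauss)
  (F := fun i y => expR (a i * y)) (c := fun i => expR (a i ^+ 2 / 2))).
- by move=> i y; exact: expR_ge0.
- by move=> i; exact: measurableT_comp.
- by move=> i; exact: std_gaussian_coord_mgf.
Qed.

Lemma std_gaussian_lincomb_tail (u : 'I_n -> R) (t : R) : 0 < t ->
  \sum_i u i ^+ 2 <= 1 ->
  (P (lincomb u @^-1` `[t, +oo[) <= (expR (- (t ^+ 2 / 2)))%:E)%E.
Proof.
move=> t_gt0 u_le1; rewrite (_ : _ @^-1` _ = [set w | t <= lincomb u w]); last first.
  by apply/seteqP; split => w /=; rewrite in_itv /= andbT.
apply: le_trans (chernoff _ _ t_gt0) _; rewrite /mmt_gen_fun unlock.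
under eq_integral do rewrite /= /lincomb mulr_suml.
under eq_integral do under eq_bigr do rewrite mulrAC.
rewrite std_gaussian_mgf -EFinM lee_fin -expRD ler_expR.
have -> : \sum_i (u i * t) ^+ 2 / 2 = t ^+ 2 / 2 * \sum_i u i ^+ 2.
  by rewrite mulr_sumr; apply: eq_bigr => i _; rewrite exprMn; field.
have := sqr_ge0 t; nra.
Qed.

Lemma std_gaussian_lincomb_max_tail k (u : 'I_k -> 'I_n -> R) (t : R) : 0 < t ->
  (forall j, \sum_i u j i ^+ 2 <= 1) ->
  (P (\bigcup_(j in [set: 'I_k]) lincomb (u j) @^-1` `[t, +oo[) <=
    (k%:R * expR (- (t ^+ 2 / 2)))%:E)%E.
Proof.
move=> t_gt0 u_le1; apply: measure_bigcup_ord_le => j.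
  exact: measurable_funPTI.
exact: std_gaussian_lincomb_tail.
Qed.

End gaussian_vector.

Section euclidean_norm.
Context (R : realType) (n : nat).
Implicit Types a b c : 'I_n -> R.

Let sumsq_ge0 a : 0 <= \sum_i a i ^+ 2.
Proof. by apply: sumr_ge0 => i _; exact: sqr_ge0. Qed.

Lemma enorm_ge0 a : 0 <= enorm a.
Proof. exact: sqrtr_ge0. Qed.

Lemma enorm_sqr a : enorm a ^+ 2 = \sum_i a i ^+ 2.
Proof. by rewrite sqr_sqrtr. Qed.

Lemma enorm_eq0 a : enorm a = 0 -> forall i, a i = 0.
Proof.
move=> /eqP; rewrite sqrtr_eq0 => a_le0 i; apply/eqP; rewrite -sqrf_eq0.
have /psumr_eq0P sum0 : \sum_i a i ^+ 2 = 0 by apply/eqP; rewrite eq_le a_le0 sumsq_ge0.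
by rewrite sum0// => j _; exact: sqr_ge0.
Qed.

Lemma enorm_cauchy_schwarz a b : \sum_i a i * b i <= enorm a * enorm b.
Proof.
set X := \sum_i a i * b i; set A := \sum_i a i ^+ 2; set B := \sum_i b i ^+ 2.
suff X2 : X ^+ 2 <= A * B.
  rewrite /enorm -sqrtrM ?sumsq_ge0// (le_trans (ler_norm X))//.
  by rewrite -sqrtr_sqr ler_sqrt// mulr_ge0 ?sumsq_ge0.
have [a0|A_neq0] := eqVneq (enorm a) 0.
  have -> : X = 0 by rewrite /X big1// => i _; rewrite (enorm_eq0 a0) mul0r.
  by rewrite expr0n mulr_ge0 ?sumsq_ge0.
have A_gt0 : 0 < A.
  by rewrite lt_def sumsq_ge0 andbT; apply: contraNneq A_neq0 => A0; rewrite /enorm -/A A0 sqrtr0.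
(* the discriminant argument, at the minimiser l of sum_i (l a_i - b_i)^2 *)
pose l := X / A.
have expand : \sum_i (l * a i - b i) ^+ 2 = l ^+ 2 * A - 2 * l * X + B.
  rewrite /A /X /B !mulr_sumr -sumrB -big_split /=.
  by apply: eq_bigr => i _; ring.
have : 0 <= l ^+ 2 * A - 2 * l * X + B by rewrite -expand sumsq_ge0.
have -> : l ^+ 2 * A - 2 * l * X + B = B - X ^+ 2 / A by rewrite /l; field; rewrite gt_eqF.
by rewrite subr_ge0 ler_pdivrMr// mulrC.
Qed.

Lemma enormD a b : enorm (fun i => a i + b i) <= enorm a + enorm b.
Proof.
rewrite -(ger0_norm (addr_ge0 (enorm_ge0 a) (enorm_ge0 b))) -sqrtr_sqr ler_sqrt ?sqr_ge0//.
have -> : \sum_i (a i + b i) ^+ 2 =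
    \sum_i a i ^+ 2 + 2 * \sum_i a i * b i + \sum_i b i ^+ 2.
  by rewrite mulr_sumr -!big_split /=; apply: eq_bigr => i _; ring.
rewrite sqrrD -!enorm_sqr lerD2r lerD2l mulr2n.
have := enorm_cauchy_schwarz a b; lra.
Qed.

Lemma enorm_distD a b c :
  enorm (fun i => a i - c i) <= enorm (fun i => a i - b i) + enorm (fun i => b i - c i).
Proof.
rewrite (_ : (fun i => a i - c i) = (fun i => (a i - b i) + (b i - c i))).
  exact: enormD.
by apply/funext => i; rewrite addrA subrK.
Qed.

Lemma enorm_distC a b : enorm (fun i => a i - b i) = enorm (fun i => b i - a i).
Proof. by rewrite /enorm; congr Num.sqrt; apply: eq_bigr => i _; rewrite -sqrrN opprB. Qed.

Definition direction a i := a i / enorm a.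

Lemma sumsq_direction_le1 a : \sum_i direction a i ^+ 2 <= 1.
Proof.
under eq_bigr do rewrite expr_div_n; rewrite -mulr_suml -enorm_sqr.
have [->|a_neq0] := eqVneq (enorm a) 0; first by rewrite expr0n invr0 mulr0.
by rewrite divff// sqrf_eq0.
Qed.

Lemma dot_direction a b : \sum_i a i * b i = enorm a * \sum_i direction a i * b i.
Proof.
rewrite mulr_sumr; apply: eq_bigr => i _; rewrite mulrA; congr (_ * _).
have [a0|a_neq0] := eqVneq (enorm a) 0; first by rewrite a0 mul0r (enorm_eq0 a0).
by rewrite /direction mulrCA divff// mulr1.
Qed.

Lemma closer_center_dist_le (mu x ci cj : 'I_n -> R) (s t : R) : 0 <= s -> 0 <= t ->
  enorm (fun i => mu i + s * x i - cj i) <= enorm (fun i => mu i + s * x i - ci i) ->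
  \sum_i (cj i - ci i) * x i <= enorm (fun i => cj i - ci i) * t ->
  enorm (fun i => mu i - cj i) <= enorm (fun i => mu i - ci i) + 2 * s * t.
Proof.
move=> s_ge0 t_ge0 closer x_le.
set D := enorm (fun i => mu i - cj i); set r := enorm (fun i => mu i - ci i).
have sqr_le : D ^+ 2 <= r ^+ 2 + 2 * s * \sum_i (cj i - ci i) * x i.
  have expand : r ^+ 2 + 2 * s * \sum_i (cj i - ci i) * x i - D ^+ 2 =
      \sum_i (mu i + s * x i - ci i) ^+ 2 - \sum_i (mu i + s * x i - cj i) ^+ 2.
    rewrite /D /r !enorm_sqr mulr_sumr -big_split -!sumrB /=.
    by apply: eq_bigr => i _; ring.
  by rewrite -subr_ge0 expand subr_ge0 -ler_sqrt.
have centers_le : enorm (fun i => cj i - ci i) <= r + D.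
  by apply: le_trans (enorm_distD cj mu ci) _; rewrite enorm_distC -/D addrC.
have main : D ^+ 2 <= r ^+ 2 + 2 * (s * t) * (r + D).
  apply: (le_trans sqr_le); rewrite lerD2l -!mulrA !ler_wpM2l//.
  by rewrite (le_trans x_le)// mulrC ler_wpM2l.
have := enorm_ge0 (fun i => mu i - cj i); have := enorm_ge0 (fun i => mu i - ci i).
rewrite -/D -/r; have := mulr_ge0 s_ge0 t_ge0; nra.
Qed.

End euclidean_norm.


Theorem lemma5p2 (R : realType) (n k : nat) (C : 'I_k -> ('I_n -> R))
  (cell : ('I_n -> R) -> 'I_k) (sigma Rad eps : R) (mu : 'I_n -> R)
  (d : measure_display) (T : measurableType d) (P : probability T R)
  (xi : 'I_n -> {RV P >-> R}) :
  voronoi_assignment C cell ->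
  0 < sigma -> 0 <= Rad -> 0 < eps < 1 ->
  (exists i : 'I_k, enorm (fun t => mu t - C i t) <= Rad) ->
  std_gaussian_vector xi ->
  let Y := fun (w : T) (t : 'I_n) => mu t + sigma * xi t w in
  exists A : set T, [/\ measurable A, ((1 - eps)%:E <= P A)%E &
    A `<=` [set w | enorm (fun t => mu t - C (cell (Y w)) t)
                    <= 3 * Rad + 2 * Num.sqrt 2 * sigma * Num.sqrt (ln (k%:R / eps))]].
Proof.
move=> voronoi sigma_gt0 Rad_ge0 /andP[eps_gt0 eps_lt1] [i0 near_i0] xi_gauss Y.
have k_gt0 : 0 < k%:R :> R by rewrite ltr0n (leq_ltn_trans _ (ltn_ord i0)).
set L := ln (k%:R / eps).
have L_gt0 : 0 < L.
  by rewrite ln_gt0// ltr_pdivlMr// mul1r (lt_le_trans eps_lt1)// ler1n -(ltr0n R).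
pose t := Num.sqrt (2 * L).
have t_gt0 : 0 < t by rewrite sqrtr_gt0 mulr_gt0.
(* t is chosen so that the union bound over the k centers gives exactly eps *)
have tail_eps : k%:R * expR (- (t ^+ 2 / 2)) = eps.
  rewrite sqr_sqrtr ?mulr_ge0 ?ltW// [2 * L]mulrC mulfK// expRN lnK ?posrE ?divr_gt0//.
  by rewrite invf_div mulrCA divff ?gt_eqF ?mulr1.
pose u j := direction (fun i => C j i - C i0 i).
pose B := \bigcup_(j in [set: 'I_k]) lincomb xi (u j) @^-1` `[t, +oo[.
have mB : measurable B.
  by apply: fin_bigcup_measurable => // j _; exact: measurable_funPTI.
exists (~` B); split; first exact: measurableC.
  rewrite probability_setC// EFinB leeB// -tail_eps.
  by apply: std_gaussian_lincomb_max_tail => // j; exact: sumsq_direction_le1.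
move=> w /= notBw; set j := cell (Y w).
have dot_le : \sum_i (C j i - C i0 i) * xi i w <= enorm (fun i => C j i - C i0 i) * t.
  rewrite dot_direction ler_wpM2l ?enorm_ge0// ltW// ltNge; apply/negP => t_le.
  by apply: notBw; exists j => //=; rewrite in_itv /= t_le.
apply: le_trans (closer_center_dist_le (x := fun i => xi i w) (ltW sigma_gt0) (ltW t_gt0)
  (voronoi (Y w) i0) dot_le) _.
by rewrite /t sqrtrM ?ler0n//; lra.
Qed.
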